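(* Let $k\ge2$ and $n<0$, and write $q=q_{n,k}$, $r=r_{n,k}$. Every monomial occurring in $\mathcal{F}_{n,k}(x)$ has exponent at least $r$, and the coefficient of $x^r$ in $\mathcal{F}_{n,k}(x)$ equals $(-1)^r\binom{q}{r}$, with $\binom{q}{r}=0$ when $q<r$. In particular, if $q\ge r$ then $\mathcal{F}_{n,k}(x)$ is not identically zero, and its lowest-degree term is $(-1)^r\binom{q}{r}x^r$.
   Context: For $k\ge2$, the polynomials $\mathcal{F}_{n,k}(x)\in\mathbb{Z}[x]$ ($n\in\mathbb{Z}$) are defined by $\mathcal{F}_{1,k}=1$, $\mathcal{F}_{n,k}=0$ for $n=0,-1,\dots,-(k-2)$, and $\mathcal{F}_{n,k}(x)=\sum_{j=1}^{k}x^{k-j}\mathcal{F}_{n-j,k}(x)$ for all $n\in\mathbb{Z}$. This recurrence is used upwards for $n\ge2$, and downwards for $n\le-(k-1)$ as $\mathcal{F}_{n,k}=\mathcal{F}_{n+k,k}-\sum_{j=1}^{k-1}x^j\mathcal{F}_{n+j,k}$. For $n\le0$, set $q_{n,k}=\lfloor(|n|+1)/k\rfloor$ and let $r_{n,k}\in\{0,\dots,k-1\}$ be the residue of $|n|+1$ modulo $k$. Then $|n|+1=kq_{n,k}+r_{n,k}$. *)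

From HB Require Import structures.
From mathcomp Require Import all_boot all_order all_algebra.
Set Implicit Arguments. Unset Strict Implicit. Unset Printing Implicit Defensive.
Import Order.TTheory GRing.Theory Num.Theory.
Local Open Scope ring_scope.

(* [is_Fseq k F] : F : int -> {poly int} is the family (F_{n,k})_{n in Z}
   defined in the paper: F_{1,k} = 1, F_{n,k} = 0 for -(k-2) <= n <= 0,
   and F_{n,k} = sum_{j=1}^k x^(k-j) F_{n-j,k} for all n in Z.
   (Since the coefficient of F_{n-k,k} is x^0 = 1, these conditions determine
   F uniquely, both upwards and downwards.) *)
Definition is_Fseq (k : nat) (F : int -> {poly int}) : Prop :=
  [/\ F 1 = 1,
      (forall n : int, - (k%:Z - 2) <= n <= 0 -> F n = 0) &
      (forall n : int, F n = \sum_(1 <= j < k.+1) 'X^(k - j) * F (n - j%:Z))].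

From HB Require Import structures.
From mathcomp Require Import all_boot all_order all_algebra.
From mathcomp Require Import zify ring.
Import Order.TTheory GRing.Theory Num.Theory.
Local Open Scope ring_scope.

(* Solving the recurrence for its last term gives the downward step
   F_m = (1 + x^k) F_{m+k} - x F_{m+k+1}.  Below degree k the term x^k F_{m+k}
   is invisible, so writing 1 - n = qk + r, the coefficients of degree < k obey
   c_i(q+1, r) = c_i(q, r) - c_{i-1}(q, r-1): Pascal's rule with a sign.
   From the initial values c(0, 0) = 1 and F = 0 at 1 - r for 0 < r < k, induction
   on q shows that c_i(q, r) = 0 for i < r and c_r(q, r) = (-1)^r C(q, r). *)

Section LowestTerm.

Variables (R : comNzRingType) (k : nat) (F : int -> {poly R}).
Hypothesis Frec :
  forall n : int, F n = \sum_(1 <= j < k.+1) 'X^(k - j) * F (n - j%:Z).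

Lemma Fseq_shift (m : int) :
  F (m + k%:Z) = \sum_(i < k) 'X^i * F (m + i%:Z).
Proof.
rewrite Frec big_add1 /= big_mkord (reindex_inj rev_ord_inj) /=.
apply: eq_bigr => i _; have lt_ik := ltn_ord i.
have -> : (k - (k - i.+1).+1)%N = i by lia.
by congr (_ * F _); lia.
Qed.

Lemma Fseq_downward (m : int) : (0 < k)%N ->
  F m = F (m + k%:Z) + 'X^k * F (m + k%:Z) - 'X * F (m + k%:Z + 1).
Proof.
case: k Frec Fseq_shift => // k' _ shift _.
have e1 := shift m; have e2 := shift (m + 1).
rewrite big_ord_recl /= expr0 mul1r addr0 in e1.
rewrite big_ord_recr /= in e2.
have -> : m + k'.+1%:Z + 1 = m + 1 + k'.+1%:Z by lia.
rewrite e2 mulrDr mulrA -exprS.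
have -> : m + 1 + k'%:Z = m + k'.+1%:Z by lia.
rewrite e1.
have -> : 'X * (\sum_(i < k') 'X^i * F (m + 1 + i%:Z))
          = \sum_(i < k') 'X^(bump 0 i) * F (m + bump 0 i).
  rewrite mulr_sumr; apply: eq_bigr => i _.
  by rewrite mulrA -exprS /bump /=; congr (_ * F _); lia.
ring.
Qed.

Lemma coef_Fseq_downward (m : int) (i : nat) : (i < k)%N ->
  (F m)`_i = (F (m + k%:Z))`_i - ('X * F (m + k%:Z + 1))`_i.
Proof.
move=> lt_ik; rewrite (Fseq_downward m) ?(leq_ltn_trans _ lt_ik) //.
by rewrite coefB coefD coefXnM lt_ik addr0.
Qed.

Hypotheses (F1 : F 1 = 1)
  (F0 : forall n : int, - (k%:Z - 2) <= n <= 0 -> F n = 0).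

Local Notation idx q r := (1 - (q * k + r)%N%:Z).

Lemma idx_shift q r : idx q.+1 r + k%:Z = idx q r.
Proof. by lia. Qed.

Lemma idx_succ q r : idx q r.+1 + 1 = idx q r.
Proof. by lia. Qed.

Lemma Fseq_idx0 r : (0 < r < k)%N -> F (idx 0 r) = 0.
Proof. by move=> r_bounds; apply: F0; lia. Qed.

Lemma coef_Fseq_below q r i : (r < k)%N -> (i < r)%N -> (F (idx q r))`_i = 0.
Proof.
elim: q r i => [|q IHq] r i lt_rk lt_ir.
  by rewrite Fseq_idx0 ?coef0 //; lia.
rewrite coef_Fseq_downward ?(ltn_trans lt_ir) // idx_shift coefXM.
case: r lt_rk lt_ir => // s lt_sk lt_is.
rewrite idx_succ IHq // sub0r; case: i lt_is => [|i] lt_is /=.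
  by rewrite oppr0.
by rewrite IHq ?oppr0 // ltnW.
Qed.

Lemma coef_Fseq_lowest q r : (r < k)%N ->
  (F (idx q r))`_r = (-1) ^+ r * ('C(q, r))%:R.
Proof.
elim: q r => [|q IHq] [|s] lt_rk.
- have -> : idx 0 0 = 1 by lia.
  by rewrite F1 coef1 expr0 mul1r.
- by rewrite Fseq_idx0 ?coef0 ?bin0n ?mulr0.
- by rewrite coef_Fseq_downward // idx_shift coefXM IHq // !bin0 subr0.
rewrite coef_Fseq_downward // idx_shift coefXM /= idx_succ.
by rewrite !IHq ?(ltnW lt_rk) // binS natrD exprS; ring.
Qed.

End LowestTerm.

Lemma neg_int_euclid (k : nat) {n : int} : n < 0 ->
  n = 1 - (((`|n|%N + 1) %/ k) * k + (`|n|%N + 1) %% k)%N%:Z.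
Proof. by rewrite -divn_eq; case: n => // m _; rewrite NegzE /=; lia. Qed.

Theorem mainTheorem5 (k : nat) (F : int -> {poly int}) (n : int) :
  (2 <= k)%N -> is_Fseq k F -> n < 0 ->
  let q := ((`|n|%N + 1) %/ k)%N in
  let r := ((`|n|%N + 1) %% k)%N in
  [/\ (forall i : nat, (i < r)%N -> (F n)`_i = 0),
      (F n)`_r = (-1) ^+ r * ('C(q, r))%:R &
      ((r <= q)%N -> F n != 0 /\ (F n)`_r != 0)].
Proof.
move=> k_gt1 [F1 F0 Frec] n_lt0 q r.
have lt_rk : (r < k)%N by rewrite ltn_mod (ltn_trans _ k_gt1).
have en := neg_int_euclid k n_lt0; rewrite -/q -/r in en.
have lowest : (F n)`_r = (-1) ^+ r * ('C(q, r))%:R.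
  by rewrite en coef_Fseq_lowest.
have coef_neq0 : (r <= q)%N -> (F n)`_r != 0.
  by move=> le_rq; rewrite lowest mulf_neq0 ?signr_eq0 ?pnatr_eq0 -?lt0n ?bin_gt0.
split=> // [i lt_ir|le_rq]; first by rewrite en coef_Fseq_below.
split; last exact: coef_neq0 le_rq.
by apply: contraNneq (coef_neq0 le_rq) => ->; rewrite coef0.
Qed.
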